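(* Let $e_1,e_2$ be connected events in the LTSI of CCSK$^{\mathrm P}$. Then: (1) exactly one of $e_1\mathrel\iota e_2$ and $e_1\otimes e_2$ holds; (2) if $e_1\odot e_2$ then $e_1\mathrel\iota e_2$; (3) if $e_1,e_2$ are composable and $e_1\mathrel\iota e_2$ then $e_1\odot e_2$.
   Context: Names $\mathsf N$ with bijection $\overline\cdot$ onto disjoint co-names; $\mathsf L=\mathsf N\cup\overline{\mathsf N}\cup\{\tau\}$ ($\alpha$ over $\mathsf L$, $\lambda$ over $\mathsf L\setminus\{\tau\}$); keys $\mathsf K$ denumerable. CCSK processes $X::=\mathbf 0\mid\alpha.X\mid X\backslash\lambda\mid X+Y\mid X|Y\mid\alpha[k].X$; $\mathrm{keys}(X)$ keys in $X$. Directions $D\in\{\mathrm L,\mathrm R\}$, $\bar{\mathrm L}=\mathrm R$, $\bar{\mathrm R}=\mathrm L$. Proof keyed labels $\theta::=\upsilon\alpha[k]\mid\upsilon\langle\upsilon_1\lambda[k],\upsilon_2\overline\lambda[k]\rangle$ ($\upsilon,\upsilon_i\in\{|_{\mathrm L},|_{\mathrm R},+_{\mathrm L},+_{\mathrm R}\}^*$), $\ell(\upsilon\alpha[k])=\alpha$, $\ell(\upsilon\langle\cdots\rangle)=\tau$, $\mathrm{key}(\theta)=k$. Forward CCSK$^{\mathrm P}$ transitions: least relation closed under (act) $\alpha.X\xrightarrow{\alpha[k]}\alpha[k].X$ if $\mathrm{keys}(X)=\emptyset$; (pre) $X\xrightarrow\theta X',\mathrm{key}(\theta)\ne k\Rightarrow\alpha[k].X\xrightarrow\theta\alpha[k].X'$;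 (res) $X\xrightarrow\theta X',\ell(\theta)\notin\{\lambda,\overline\lambda\}\Rightarrow X\backslash\lambda\xrightarrow\theta X'\backslash\lambda$; (par) $X\xrightarrow\theta X',\mathrm{key}(\theta)\notin\mathrm{keys}(Y)\Rightarrow X|Y\xrightarrow{|_{\mathrm L}\theta}X'|Y$, $Y|X\xrightarrow{|_{\mathrm R}\theta}Y|X'$; (syn) $X\xrightarrow{\upsilon_1\lambda[k]}X',Y\xrightarrow{\upsilon_2\overline\lambda[k]}Y'\Rightarrow X|Y\xrightarrow{\langle\upsilon_1\lambda[k],\upsilon_2\overline\lambda[k]\rangle}X'|Y'$; (sum) $X\xrightarrow\theta X',\mathrm{keys}(Y)=\emptyset\Rightarrow X+Y\xrightarrow{+_{\mathrm L}\theta}X'+Y$, $Y+X\xrightarrow{+_{\mathrm R}\theta}Y+X'$. Backward transitions are converses of forward ones; $\bar t$ is the inverse of $t$. Only processes reachable by a path from a key-free process are considered. Transitions are connected if there is a path from the source of one to the target of the other; composable if the target of the first is the source of the second; coinitial if same source. Relations on proof labels (least closed under rules; ''prefix'' = form $\beta[k']$): Connectivity $\frown$: (A1) $\alpha[k]\frown\theta$; (A2) $\theta\frown\alpha[k]$ if $\theta$ not a prefix; (P1) $|_D\theta\frown|_D\theta'$ if $\theta\frown\theta'$; (P2) $|_D\theta\frown|_{\bar D}\theta'$; (C1),(C2) likewise with $+$; (S1) $|_D\theta\frown\langle\theta_{\mathrm L},\theta_{\mathrm R}\rangle$ if $\theta\frown\theta_D$; (S2) symmetric; (S3) $\langle\theta_1,\theta_2\rangle\frown\langle\theta_1',\theta_2'\rangle$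 if $\theta_i\frown\theta_i'$ for $i=1,2$. Dependence $\otimes$: A1, A2, C1, C2, P1, S1, S2 with $\otimes$ for $\frown$; (P2$_k$) $|_D\theta\otimes|_{\bar D}\theta'$ if equal keys; (S3) $\langle\theta_1,\theta_2\rangle\otimes\langle\theta_1',\theta_2'\rangle$ if for some $i\ne j$, $\theta_i\otimes\theta_i'$ and $\theta_j\frown\theta_j'$. Independence $\iota$: C1, P1, S1, S2, S3 with $\iota$ for $\frown$, and (P2$_k$) $|_D\theta\mathrel\iota|_{\bar D}\theta'$ if different keys. On transitions: $t_1\mathrel\iota t_2$ iff connected and labels $\iota$. Event equivalence $\sim$: smallest equivalence on transitions with $t\sim t'$ whenever $t:P\to Q$, $u:P\to R$, $u':Q\to S$, $t':R\to S$ ($u'$ with label and direction of $u$, $t'$ of $t$) and $t\mathrel\iota u$. Events are classes $[t]$. For events: $e_1,e_2$ connected (resp. composable) if some $t_1\in e_1$, $t_2\in e_2$ are connected (resp. composable); $e_1\mathrel\iota e_2$ if some $t_1\in e_1,t_2\in e_2$ satisfy $t_1\mathrel\iota t_2$; $e_1\otimes e_2$ if some $t_1\in e_1,t_2\in e_2$ have labels satisfying $\otimes$; core independence $e_1\odot e_2$ if some coinitial $t_1\in e_1,t_2\in e_2$ satisfy $t_1\mathrel\iota t_2$. *)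

From Stdlib Require Import List Relations.
Import ListNotations.

Set Implicit Arguments.

Section CCSKP.

Variable N : Type.
Definition key := nat.

Inductive vis : Type := VName (a : N) | VCoName (a : N).
Inductive act : Type := Vis (l : vis) | Tau.

Definition vbar (l : vis) : vis :=
  match l with VName a => VCoName a | VCoName a => VName a end.

Inductive proc : Type :=
  | Nil : proc
  | Pre : act -> proc -> proc
  | Res : proc -> vis -> proc
  | Sum : proc -> proc -> proc
  | Par : proc -> proc -> proc
  | Keyed : act -> key -> proc -> proc.

Fixpoint keys (X : proc) : list key :=
  match X with
  | Nil => []
  | Pre _ X => keys X
  | Res X _ => keys X
  | Sum X Y => keys X ++ keys Y
  | Par X Y => keys X ++ keys Y
  | Keyed _ k X => k :: keys X
  end.

Inductive dir : Type := DL | DR.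
Definition dbar (d : dir) : dir := match d with DL => DR | DR => DL end.

(* Proof keyed labels, built structurally:
     PA α k        = α[k]
     PPar D θ      = |_D θ
     PSum D θ      = +_D θ
     PSyn θ1 θ2    = ⟨θ1, θ2⟩
   so  υα[k]  is a string of PPar/PSum around PA. *)
Inductive plabel : Type :=
  | PA : act -> key -> plabel
  | PPar : dir -> plabel -> plabel
  | PSum : dir -> plabel -> plabel
  | PSyn : plabel -> plabel -> plabel.

Fixpoint lab (t : plabel) : act :=
  match t with
  | PA a _ => a
  | PPar _ t => lab t
  | PSum _ t => lab t
  | PSyn _ _ => Tau
  end.

Fixpoint pkey (t : plabel) : key :=
  match t with
  | PA _ k => k
  | PPar _ t => pkey t
  | PSum _ t => pkey t
  | PSyn t _ => pkey t
  end.

Definition is_prefix (t : plabel) : Prop := exists a k, t = PA a k.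

Inductive fstep : proc -> plabel -> proc -> Prop :=
  | f_act : forall a X k, keys X = [] ->
      fstep (Pre a X) (PA a k) (Keyed a k X)
  | f_pre : forall a k X t X', fstep X t X' -> pkey t <> k ->
      fstep (Keyed a k X) t (Keyed a k X')
  | f_res : forall X t X' l, fstep X t X' ->
      lab t <> Vis l -> lab t <> Vis (vbar l) ->
      fstep (Res X l) t (Res X' l)
  | f_parL : forall X t X' Y, fstep X t X' -> ~ In (pkey t) (keys Y) ->
      fstep (Par X Y) (PPar DL t) (Par X' Y)
  | f_parR : forall X t X' Y, fstep X t X' -> ~ In (pkey t) (keys Y) ->
      fstep (Par Y X) (PPar DR t) (Par Y X')
  | f_syn : forall X X' Y Y' t1 t2 l k,
      fstep X t1 X' -> fstep Y t2 Y' ->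
      lab t1 = Vis l -> pkey t1 = k ->
      lab t2 = Vis (vbar l) -> pkey t2 = k ->
      fstep (Par X Y) (PSyn t1 t2) (Par X' Y')
  | f_sumL : forall X t X' Y, fstep X t X' -> keys Y = [] ->
      fstep (Sum X Y) (PSum DL t) (Sum X' Y)
  | f_sumR : forall X t X' Y, fstep X t X' -> keys Y = [] ->
      fstep (Sum Y X) (PSum DR t) (Sum Y X').

(* Transitions (forward: fwd = true; backward = converse of a forward one) *)
Record trans : Type := Trans { src : proc; tlab : plabel; fwd : bool; tgt : proc }.

Definition valid (t : trans) : Prop :=
  if fwd t then fstep (src t) (tlab t) (tgt t) else fstep (tgt t) (tlab t) (src t).

Definition step (P Q : proc) : Prop :=
  exists t, fstep P t Q \/ fstep Q t P.

Definition path : proc -> proc -> Prop := clos_refl_trans proc step.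

(* only processes reachable from a key-free process are considered *)
Definition reachable (P : proc) : Prop := exists Q, keys Q = [] /\ path Q P.

Definition lts_trans (t : trans) : Prop := reachable (src t) /\ valid t.

Definition t_connected (t1 t2 : trans) : Prop := path (src t1) (tgt t2).
Definition t_composable (t1 t2 : trans) : Prop := tgt t1 = src t2.
Definition t_coinitial (t1 t2 : trans) : Prop := src t1 = src t2.

Inductive lconn : plabel -> plabel -> Prop :=
  | cA1 : forall a k t, lconn (PA a k) t
  | cA2 : forall t a k, ~ is_prefix t -> lconn t (PA a k)
  | cP1 : forall d t t', lconn t t' -> lconn (PPar d t) (PPar d t')
  | cP2 : forall d t t', lconn (PPar d t) (PPar (dbar d) t')
  | cC1 : forall d t t', lconn t t' -> lconn (PSum d t) (PSum d t')
  | cC2 : forall d t t', lconn (PSum d t) (PSum (dbar d) t')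
  | cS1L : forall t tL tR, lconn t tL -> lconn (PPar DL t) (PSyn tL tR)
  | cS1R : forall t tL tR, lconn t tR -> lconn (PPar DR t) (PSyn tL tR)
  | cS2L : forall t tL tR, lconn tL t -> lconn (PSyn tL tR) (PPar DL t)
  | cS2R : forall t tL tR, lconn tR t -> lconn (PSyn tL tR) (PPar DR t)
  | cS3 : forall t1 t2 t1' t2', lconn t1 t1' -> lconn t2 t2' ->
      lconn (PSyn t1 t2) (PSyn t1' t2').

Inductive ldep : plabel -> plabel -> Prop :=
  | dA1 : forall a k t, ldep (PA a k) t
  | dA2 : forall t a k, ~ is_prefix t -> ldep t (PA a k)
  | dC1 : forall d t t', ldep t t' -> ldep (PSum d t) (PSum d t')
  | dC2 : forall d t t', ldep (PSum d t) (PSum (dbar d) t')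
  | dP1 : forall d t t', ldep t t' -> ldep (PPar d t) (PPar d t')
  | dP2k : forall d t t', pkey t = pkey t' -> ldep (PPar d t) (PPar (dbar d) t')
  | dS1L : forall t tL tR, ldep t tL -> ldep (PPar DL t) (PSyn tL tR)
  | dS1R : forall t tL tR, ldep t tR -> ldep (PPar DR t) (PSyn tL tR)
  | dS2L : forall t tL tR, ldep tL t -> ldep (PSyn tL tR) (PPar DL t)
  | dS2R : forall t tL tR, ldep tR t -> ldep (PSyn tL tR) (PPar DR t)
  | dS3_1 : forall t1 t2 t1' t2', ldep t1 t1' -> lconn t2 t2' ->
      ldep (PSyn t1 t2) (PSyn t1' t2')
  | dS3_2 : forall t1 t2 t1' t2', ldep t2 t2' -> lconn t1 t1' ->
      ldep (PSyn t1 t2) (PSyn t1' t2').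

Inductive lind : plabel -> plabel -> Prop :=
  | iC1 : forall d t t', lind t t' -> lind (PSum d t) (PSum d t')
  | iP1 : forall d t t', lind t t' -> lind (PPar d t) (PPar d t')
  | iP2k : forall d t t', pkey t <> pkey t' -> lind (PPar d t) (PPar (dbar d) t')
  | iS1L : forall t tL tR, lind t tL -> lind (PPar DL t) (PSyn tL tR)
  | iS1R : forall t tL tR, lind t tR -> lind (PPar DR t) (PSyn tL tR)
  | iS2L : forall t tL tR, lind tL t -> lind (PSyn tL tR) (PPar DL t)
  | iS2R : forall t tL tR, lind tR t -> lind (PSyn tL tR) (PPar DR t)
  | iS3 : forall t1 t2 t1' t2', lind t1 t1' -> lind t2 t2' ->
      lind (PSyn t1 t2) (PSyn t1' t2').

Definition t_ind (t1 t2 : trans) : Prop := t_connected t1 t2 /\ lind (tlab t1) (tlab t2).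

(* the square generating event equivalence:
   t : P -> Q, u : P -> R, u' : Q -> S, t' : R -> S, with u' having the label and
   direction of u, t' those of t, and t ι u *)
Definition square (t t' : trans) : Prop :=
  exists u u',
    lts_trans t /\ lts_trans u /\ lts_trans u' /\ lts_trans t' /\
    src u = src t /\ src u' = tgt t /\ src t' = tgt u /\ tgt t' = tgt u' /\
    tlab u' = tlab u /\ fwd u' = fwd u /\ tlab t' = tlab t /\ fwd t' = fwd t /\
    t_ind t u.

Definition ev_eq : trans -> trans -> Prop := clos_refl_sym_trans trans square.

Definition event := trans -> Prop.
Definition is_event (e : event) : Prop :=
  exists t, lts_trans t /\ forall s, e s <-> ev_eq t s.

Definition e_connected (e1 e2 : event) : Prop :=
  exists t1 t2, e1 t1 /\ e2 t2 /\ t_connected t1 t2.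
Definition e_composable (e1 e2 : event) : Prop :=
  exists t1 t2, e1 t1 /\ e2 t2 /\ t_composable t1 t2.
Definition e_ind (e1 e2 : event) : Prop :=
  exists t1 t2, e1 t1 /\ e2 t2 /\ t_ind t1 t2.
Definition e_dep (e1 e2 : event) : Prop :=
  exists t1 t2, e1 t1 /\ e2 t2 /\ ldep (tlab t1) (tlab t2).
Definition e_core_ind (e1 e2 : event) : Prop :=
  exists t1 t2, e1 t1 /\ e2 t2 /\ t_coinitial t1 t2 /\ t_ind t1 t2.

End CCSKP.

(* Two facts about CCSK^P drive the proof.  First, erasing the keys of a
   reachable process gives back the key-free process it was reached from, and
   the proof labels of all transitions of processes with the same erasure are
   pairwise connected; as a connected pair of proof labels is either
   independent or dependent, and never both, part (1) follows because all
   transitions of an event carry the same label.  Second, independent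
   transitions commute: if P --th1--> Q --th2--> R (in any directions) with
   th1 and th2 independent, then P --th2--> S --th1--> R for some S.  The
   square so obtained puts P --th2--> S into the event of Q --th2--> R, which
   yields (3); (2) is immediate. *)

From Stdlib Require Import List Relations PeanoNat.
Import ListNotations.

Set Implicit Arguments.
Unset Strict Implicit.

Section CCSKP_events.

Variable N : Type.
Implicit Types (P Q R S X Y : proc N) (th : plabel N) (b : bool).

Lemma lind_sym th1 th2 : lind th1 th2 -> lind th2 th1.
Proof.
  induction 1; try (constructor; assumption).
  destruct d; [apply (iP2k DR) | apply (iP2k DL)]; congruence.
Qed.

(* The key of a synchronisation is read from its left component, while [lind]
   may look only at its right one; the two keys agree on labels of steps. *)
Fixpoint keys_coherent th : Prop :=
  match th with
  | PA _ _ => True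
  | PPar _ th' | PSum _ th' => keys_coherent th'
  | PSyn th1 th2 => pkey th2 = pkey th1 /\ keys_coherent th1 /\ keys_coherent th2
  end.

Lemma lind_pkey th1 th2 :
  keys_coherent th1 -> keys_coherent th2 -> lind th1 th2 -> pkey th1 <> pkey th2.
Proof. intros C1 C2 H; revert C1 C2; induction H; simpl; intuition congruence. Qed.

Lemma lind_ldep_exclusive th1 th2 : lind th1 th2 -> ~ ldep th1 th2.
Proof.
  induction 1; intro Hd; inversion Hd; subst; try (destruct d; discriminate); auto.
Qed.

Lemma lconn_lind_or_ldep th1 th2 : lconn th1 th2 -> lind th1 th2 \/ ldep th1 th2.
Proof.
  induction 1; repeat match goal with H : _ \/ _ |- _ => destruct H end;
    try (left; constructor; assumption); try (right; constructor; assumption).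
  destruct (Nat.eq_dec (pkey t) (pkey t'));
    [right; apply dP2k | left; apply iP2k]; assumption.
Qed.

Lemma lconn_PA_r th a k : lconn th (PA a k).
Proof.
  destruct th; [apply cA1 | ..]; apply cA2; intros (? & ? & ?); discriminate.
Qed.

(* [valid t] is convertible to [dstep (fwd t) (src t) (tlab t) (tgt t)]. *)
Definition dstep b P th Q : Prop := if b then fstep P th Q else fstep Q th P.

Lemma dstep_step b P th Q : dstep b P th Q -> step P Q.
Proof. destruct b; intro H; exists th; auto. Qed.

Lemma reachable_dstep b P th Q : reachable P -> dstep b P th Q -> reachable Q.
Proof.
  intros (P0 & Hkeys & Hpath) H; exists P0; split; [assumption|].
  eapply rt_trans; [exact Hpath | apply rt_step; eapply dstep_step; eassumption].
Qed.

Lemma fstep_keys P th Q k :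
  fstep P th Q -> In k (keys Q) <-> k = pkey th \/ In k (keys P).
Proof.
  intro H; revert k; induction H; intro k0; simpl in *; rewrite ?in_app_iff;
    repeat match goal with IH : forall k, _ <-> _ |- _ => rewrite IH end;
    repeat match goal with E : keys _ = [] |- _ => rewrite E end; simpl;
    subst; intuition; left; congruence.
Qed.

Lemma dstep_keys_coherent b P th Q : dstep b P th Q -> keys_coherent th.
Proof. destruct b; induction 1; simpl; intuition congruence. Qed.

Lemma dstep_nil b th Q : ~ dstep b (Nil N) th Q.
Proof. destruct b; intro H; inversion H. Qed.

Lemma dstep_pre b a X th Q : dstep b (Pre a X) th Q -> is_prefix th.
Proof. destruct b; intro H; inversion H; subst; do 2 eexists; reflexivity. Qed.

Inductive keyed_step b a k X : plabel N -> proc N -> Prop :=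
  | KeyedUndo : b = false -> keys X = [] -> keyed_step b a k X (PA a k) (Pre a X)
  | KeyedInner th X' : dstep b X th X' -> pkey th <> k ->
      keyed_step b a k X th (Keyed a k X').

Inductive res_step b X l : plabel N -> proc N -> Prop :=
  | ResStep th X' : dstep b X th X' -> lab th <> Vis l -> lab th <> Vis (vbar l) ->
      res_step b X l th (Res X' l).

Inductive sum_step b X Y : plabel N -> proc N -> Prop :=
  | SumStepL th X' : dstep b X th X' -> keys Y = [] ->
      sum_step b X Y (PSum DL th) (Sum X' Y)
  | SumStepR th Y' : dstep b Y th Y' -> keys X = [] ->
      sum_step b X Y (PSum DR th) (Sum X Y').

Inductive par_step b X Y : plabel N -> proc N -> Prop :=
  | ParStepL th X' : dstep b X th X' -> ~ In (pkey th) (keys Y) ->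
      par_step b X Y (PPar DL th) (Par X' Y)
  | ParStepR th Y' : dstep b Y th Y' -> ~ In (pkey th) (keys X) ->
      par_step b X Y (PPar DR th) (Par X Y')
  | ParSyn th1 th2 X' Y' l : dstep b X th1 X' -> dstep b Y th2 Y' ->
      lab th1 = Vis l -> lab th2 = Vis (vbar l) -> pkey th2 = pkey th1 ->
      par_step b X Y (PSyn th1 th2) (Par X' Y').

Lemma dstep_keyedE b a k X th Q : dstep b (Keyed a k X) th Q <-> keyed_step b a k X th Q.
Proof.
  split.
  - destruct b; intro H; inversion H; subst; constructor; auto.
  - intros [Hb Hk | th' X' H Hk]; [subst b | destruct b]; constructor; assumption.
Qed.

Lemma dstep_resE b X l th Q : dstep b (Res X l) th Q <-> res_step b X l th Q.
Proof.
  split.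
  - destruct b; intro H; inversion H; subst; constructor; assumption.
  - intros []; destruct b; constructor; assumption.
Qed.

Lemma dstep_sumE b X Y th Q : dstep b (Sum X Y) th Q <-> sum_step b X Y th Q.
Proof.
  split.
  - destruct b; intro H; inversion H; subst; constructor; assumption.
  - intros []; destruct b; constructor; assumption.
Qed.

Lemma dstep_parE b X Y th Q : dstep b (Par X Y) th Q <-> par_step b X Y th Q.
Proof.
  split.
  - destruct b; intro H; inversion H; subst; econstructor; eauto; congruence.
  - intros []; destruct b; econstructor; eauto.
Qed.

Fixpoint erase P : proc N :=
  match P with
  | Nil _ => Nil N
  | Pre a X => Pre a (erase X)
  | Res X l => Res (erase X) l
  | Sum X Y => Sum (erase X) (erase Y)
  | Par X Y => Par (erase X) (erase Y)
  | Keyed a _ X => Pre a (erase X)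
  end.

Lemma erase_fstep P th Q : fstep P th Q -> erase P = erase Q.
Proof. induction 1; simpl; congruence. Qed.

Lemma erase_path P Q : path P Q -> erase P = erase Q.
Proof.
  induction 1 as [P Q [th [H | H]] | | ]; try congruence;
    apply erase_fstep in H; congruence.
Qed.

(* The proof labels of the transitions of processes erasing to [S]. *)
Inductive label_of : proc N -> plabel N -> Prop :=
  | lo_act a k S : label_of (Pre a S) (PA a k)
  | lo_pre a S th : label_of S th -> label_of (Pre a S) th
  | lo_res S l th : label_of S th -> label_of (Res S l) th
  | lo_sumL S T th : label_of S th -> label_of (Sum S T) (PSum DL th)
  | lo_sumR S T th : label_of T th -> label_of (Sum S T) (PSum DR th)
  | lo_parL S T th : label_of S th -> label_of (Par S T) (PPar DL th)
  | lo_parR S T th : label_of T th -> label_of (Par S T) (PPar DR th)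
  | lo_syn S T th1 th2 : label_of S th1 -> label_of T th2 ->
      label_of (Par S T) (PSyn th1 th2).

Lemma label_of_lconn S th1 th2 : label_of S th1 -> label_of S th2 -> lconn th1 th2.
Proof.
  intro H1; revert th2; induction H1; intros th' H2; inversion H2; subst;
    try apply cA1; try apply lconn_PA_r; auto; constructor; auto.
Qed.

Lemma fstep_label_of P th Q : fstep P th Q -> label_of (erase P) th.
Proof. induction 1; simpl; constructor; assumption. Qed.

Lemma valid_label_of (t : trans N) :
  valid t -> label_of (erase (src t)) (tlab t) /\ label_of (erase (tgt t)) (tlab t).
Proof.
  unfold valid; destruct (fwd t); intro H; pose proof (erase_fstep H) as E;
    pose proof (fstep_label_of H); split; congruence.
Qed.

Lemma t_connected_lconn (t1 t2 : trans N) :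
  valid t1 -> valid t2 -> t_connected t1 t2 -> lconn (tlab t1) (tlab t2).
Proof.
  intros V1 V2 C; apply erase_path in C.
  apply valid_label_of in V1 as [L1 _]; apply valid_label_of in V2 as [_ L2].
  rewrite C in L1; exact (label_of_lconn L1 L2).
Qed.

Definition diamond P : Prop :=
  forall b1 b2 th1 th2 Q R, dstep b1 P th1 Q -> dstep b2 Q th2 R ->
  lind th1 th2 -> pkey th1 <> pkey th2 ->
  exists S, dstep b2 P th2 S /\ dstep b1 S th1 R.

Lemma diamond_keyed a k X : diamond X -> diamond (Keyed a k X).
Proof.
  intros IH b1 b2 th1 th2 Q R H1.
  apply dstep_keyedE in H1 as [_ _ | th1' X1 HX1 Hk1]; [intros _ Hl; inversion Hl |].
  intro H2; apply dstep_keyedE in H2 as [_ _ | th2' X2 HX2 Hk2]; [intro Hl; inversion Hl |].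
  intros Hl Hk; destruct (IH _ _ _ _ _ _ HX1 HX2 Hl Hk) as (S0 & HS1 & HS2).
  exists (Keyed a k S0); split; apply dstep_keyedE; constructor; assumption.
Qed.

Lemma diamond_res X l : diamond X -> diamond (Res X l).
Proof.
  intros IH b1 b2 th1 th2 Q R H1.
  apply dstep_resE in H1 as [th1' X1 HX1 Hl1 Hl1'].
  intro H2; apply dstep_resE in H2 as [th2' X2 HX2 Hl2 Hl2'].
  intros Hl Hk; destruct (IH _ _ _ _ _ _ HX1 HX2 Hl Hk) as (S0 & HS1 & HS2).
  exists (Res S0 l); split; apply dstep_resE; constructor; assumption.
Qed.

Lemma diamond_sum X Y : diamond X -> diamond Y -> diamond (Sum X Y).
Proof.
  intros IHX IHY b1 b2 th1 th2 Q R H1.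
  apply dstep_sumE in H1 as [a1 X1 HX1 HY | a1 Y1 HY1 HX]; intro H2;
    apply dstep_sumE in H2 as [a2 X2 HX2 _ | a2 Y2 HY2 _];
    intros Hl Hk; inversion Hl; subst; simpl in Hk.
  - destruct (IHX _ _ _ _ _ _ HX1 HX2) as (S0 & HS1 & HS2); [assumption.. |].
    exists (Sum S0 Y); split; apply dstep_sumE; constructor; assumption.
  - destruct (IHY _ _ _ _ _ _ HY1 HY2) as (S0 & HS1 & HS2); [assumption.. |].
    exists (Sum X S0); split; apply dstep_sumE; constructor; assumption.
Qed.

Lemma dstep_fresh b P th Q k :
  dstep b P th Q -> k <> pkey th -> ~ In k (keys P) <-> ~ In k (keys Q).
Proof.
  destruct b; intros H Hk; pose proof (fstep_keys k H); intuition.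
Qed.

Lemma diamond_par X Y : diamond X -> diamond Y -> diamond (Par X Y).
Proof.
  intros IHX IHY b1 b2 th1 th2 Q R H1.
  apply dstep_parE in H1 as [a1 X1 HX1 HY | a1 Y1 HY1 HX | tL tR X1 Y1 l HX1 HY1 ? ? EkR];
    intro H2;
    apply dstep_parE in H2 as [a2 X2 HX2 HY2 | a2 Y2 HY2 HX2 | uL uR X2 Y2 l' HX2 HY2 ? ? EkR'];
    intros Hl Hk; inversion Hl; subst; simpl in Hk.
  - destruct (IHX _ _ _ _ _ _ HX1 HX2) as (S0 & HS1 & HS2); [assumption.. |].
    exists (Par S0 Y); split; apply dstep_parE; constructor; assumption.
  - exists (Par X Y2); split; apply dstep_parE; constructor; try assumption.
    + rewrite (dstep_fresh HX1); auto.
    + rewrite <- (dstep_fresh HY2); auto.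
  - destruct (IHX _ _ _ _ _ _ HX1 HX2) as (S0 & HS1 & HS2); [assumption.. |].
    exists (Par S0 Y2); split; apply dstep_parE; econstructor; eauto.
    rewrite <- (dstep_fresh HY2); [assumption | congruence].
  - exists (Par X2 Y); split; apply dstep_parE; constructor; try assumption.
    + rewrite (dstep_fresh HY1); auto.
    + rewrite <- (dstep_fresh HX2); auto.
  - destruct (IHY _ _ _ _ _ _ HY1 HY2) as (S0 & HS1 & HS2); [assumption.. |].
    exists (Par X S0); split; apply dstep_parE; constructor; assumption.
  - destruct (IHY _ _ _ _ _ _ HY1 HY2) as (S0 & HS1 & HS2); [assumption | congruence |].
    exists (Par X2 S0); split; apply dstep_parE; econstructor; eauto.
    rewrite <- (dstep_fresh HX2); [assumption | congruence].
  - destruct (IHX _ _ _ _ _ _ HX1 HX2) as (S0 & HS1 & HS2); [assumption.. |].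
    exists (Par S0 Y); split; apply dstep_parE; econstructor; eauto.
    rewrite (dstep_fresh HY1); [assumption | congruence].
  - destruct (IHY _ _ _ _ _ _ HY1 HY2) as (S0 & HS1 & HS2); [assumption | congruence |].
    exists (Par X S0); split; apply dstep_parE; econstructor; eauto.
    rewrite (dstep_fresh HX1); [assumption | congruence].
  - destruct (IHX _ _ _ _ _ _ HX1 HX2) as (S0 & HS1 & HS2); [assumption.. |].
    destruct (IHY _ _ _ _ _ _ HY1 HY2) as (S1 & HS1' & HS2'); [assumption | congruence |].
    exists (Par S0 S1); split; apply dstep_parE; econstructor; eauto.
Qed.

Lemma diamond_all P : diamond P.
Proof.
  induction P.
  - intros b1 ? ? ? ? ? H1; contradiction (dstep_nil H1).
  - intros b1 b2 th1 th2 Q R H1 _ Hl _.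
    destruct (dstep_pre H1) as (? & ? & ->); inversion Hl.
  - apply diamond_res; assumption.
  - apply diamond_sum; assumption.
  - apply diamond_par; assumption.
  - apply diamond_keyed; assumption.
Qed.

Lemma composable_lind_square (t1 t2 : trans N) :
  lts_trans t1 -> lts_trans t2 -> t_composable t1 t2 -> lind (tlab t1) (tlab t2) ->
  exists t2', square t2' t2 /\ t_coinitial t1 t2' /\ t_ind t1 t2'.
Proof.
  intros [Rch1 V1] [Rch2 V2] Hcomp Hl.
  assert (V2' : dstep (fwd t2) (tgt t1) (tlab t2) (tgt t2)) by (rewrite Hcomp; exact V2).
  pose proof (lind_pkey (dstep_keys_coherent V1) (dstep_keys_coherent V2') Hl) as Hk.
  destruct (diamond_all V1 V2' Hl Hk) as (S & HS1 & HS2).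
  set (t2' := Trans (src t1) (tlab t2) (fwd t2) S).
  exists t2'; split; [| split; [reflexivity | split; simpl]].
  - exists t1, (Trans S (tlab t1) (fwd t1) (tgt t2)); simpl.
    repeat split; try assumption; try reflexivity.
    + exact (reachable_dstep Rch1 HS1).
    + symmetry; exact Hcomp.
    + apply rt_step; eapply dstep_step; exact V1.
    + apply lind_sym, Hl.
  - apply rt_step; eapply dstep_step; exact HS1.
  - exact Hl.
Qed.

Lemma ev_eq_tlab_lts (t s : trans N) :
  ev_eq t s -> tlab t = tlab s /\ (lts_trans t <-> lts_trans s).
Proof.
  induction 1 as [t s (u & u' & Hs) | | | ]; intuition congruence.
Qed.

Section Event.

Variable e : event N.
Hypothesis He : is_event e.

Lemma event_tlab (t s : trans N) : e t -> e s -> tlab t = tlab s.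
Proof.
  destruct He as (t0 & _ & Heq); intros Ht Hs.
  apply Heq, ev_eq_tlab_lts in Ht as [Lt _]; apply Heq, ev_eq_tlab_lts in Hs as [Ls _].
  congruence.
Qed.

Lemma event_lts_trans (t : trans N) : e t -> lts_trans t.
Proof.
  destruct He as (t0 & Ht0 & Heq); intro Ht.
  apply Heq, ev_eq_tlab_lts in Ht; tauto.
Qed.

Lemma event_square_closed (t t' : trans N) : e t' -> square t t' -> e t.
Proof.
  destruct He as (t0 & _ & Heq); intros Ht' Hsq.
  apply Heq; apply Heq in Ht'.
  eapply rst_trans; [exact Ht' | apply rst_sym, rst_step, Hsq].
Qed.

End Event.

End CCSKP_events.

Theorem lemma6p4 (N : Type) (e1 e2 : event N) :
  is_event e1 -> is_event e2 -> e_connected e1 e2 ->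
  ((e_ind e1 e2 \/ e_dep e1 e2) /\ ~ (e_ind e1 e2 /\ e_dep e1 e2)) /\
  (e_core_ind e1 e2 -> e_ind e1 e2) /\
  (e_composable e1 e2 -> e_ind e1 e2 -> e_core_ind e1 e2).
Proof.
  intros He1 He2 (t1 & t2 & E1 & E2 & C).
  assert (Hlab : forall s1 s2, e1 s1 -> e2 s2 ->
            tlab s1 = tlab t1 /\ tlab s2 = tlab t2)
    by (intros s1 s2 H1 H2; exact (conj (event_tlab He1 H1 E1) (event_tlab He2 H2 E2))).
  assert (Hc : lconn (tlab t1) (tlab t2))
    by (apply t_connected_lconn;
        [apply (event_lts_trans He1 E1) | apply (event_lts_trans He2 E2) | exact C]).
  split; [split | split].
  - destruct (lconn_lind_or_ldep Hc); [left | right]; exists t1, t2; repeat split; assumption.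
  - intros [(a & b & Ea & Eb & _ & Hi) (c & d & Ec & Ed & Hd)].
    destruct (Hlab _ _ Ea Eb) as [La Lb]; destruct (Hlab _ _ Ec Ed) as [Lc Ld].
    rewrite La, Lb in Hi; rewrite Lc, Ld in Hd.
    exact (lind_ldep_exclusive Hi Hd).
  - intros (a & b & Ea & Eb & _ & Hi); exists a, b; auto.
  - intros (a & b & Ea & Eb & Hab) (c & d & Ec & Ed & _ & Hi).
    destruct (Hlab _ _ Ea Eb) as [La Lb]; destruct (Hlab _ _ Ec Ed) as [Lc Ld].
    rewrite Lc, Ld, <- La, <- Lb in Hi.
    destruct (composable_lind_square (event_lts_trans He1 Ea) (event_lts_trans He2 Eb) Hab Hi)
      as (b' & Hsq & Hco & Hind).
    exists a, b'; exact (conj Ea (conj (event_square_closed He2 Eb Hsq) (conj Hco Hind))).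
Qed.
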